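(* Let $R$ be a commutative domain, $B=R(t,\sigma,H,J)$, and let $\mathcal O=\{\sigma^k(\mathfrak m):k\in\mathbb Z\}\subseteq\operatorname{Maxspec}(R)$ be an infinite orbit. If $M$ is a simple $B$-module which is an $R$-weight module with $\operatorname{Supp}_R(M)\subseteq\mathcal O$, then $\dim_{R/\sigma^k(\mathfrak m)}M_{\sigma^k(\mathfrak m)}\le1$ for all $k\in\mathbb Z$.
   Context: $\Bbbk$ is a field; all algebras are associative unital $\Bbbk$-algebras. For an algebra $R$ and $\sigma\in\operatorname{Aut}_\Bbbk(R)$, $R[t,t^{-1};\sigma]$ is the skew Laurent ring: generated over $R$ by $t,t^{-1}$ with $tt^{-1}=t^{-1}t=1$ and $t^{\pm1}r=\sigma^{\pm1}(r)t^{\pm1}$ for $r\in R$. Given two-sided ideals $H,J$ of $R$, set $I^{(0)}=R$, $I^{(n)}=J\sigma(J)\cdots\sigma^{n-1}(J)$ for $n\ge1$, and $I^{(n)}=\sigma^{-1}(H)\sigma^{-2}(H)\cdots\sigma^{n}(H)$ for $n\le-1$; it is assumed throughout that $I^{(n)}\neq0$ for all $n\in\mathbb Z$. The Bell–Rogalski (BR) algebra is $R(t,\sigma,H,J)=\bigoplus_{n\in\mathbb Z}I^{(n)}t^n\subseteq R[t,t^{-1};\sigma]$. For $R$ a commutative domain, a left $B$-module $M$ is an $R$-weight module if $M=\bigoplus_{\mathfrak m\in\operatorname{Maxspec}(R)}M_{\mathfrak m}$ where $M_{\mathfrak m}=\{v\in M:\mathfrak m v=0\}$ and $\dim_{R/\mathfrak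 m}M_{\mathfrak m}<\infty$ for all $\mathfrak m$; $\operatorname{Supp}_R(M)=\{\mathfrak m:M_{\mathfrak m}\neq0\}$. $\mathbb Z$ acts on $\operatorname{Maxspec}(R)$ by $k\cdot\mathfrak m=\sigma^k(\mathfrak m)$. *)

From HB Require Import structures.
From mathcomp Require Import all_boot all_order all_algebra.
Set Implicit Arguments. Unset Strict Implicit. Unset Printing Implicit Defensive.
Import Order.TTheory GRing.Theory Num.Theory.
Local Open Scope ring_scope.

Section BR.
Variable R : comNzRingType.

Definition same_set (A B : R -> Prop) : Prop := forall x, A x <-> B x.

(* two-sided ideal (R is commutative) *)
Definition is_ideal (A : R -> Prop) : Prop :=
  [/\ A 0, (forall x y, A x -> A y -> A (x + y)) & (forall r x, A x -> A (r * x))].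

Definition is_maximal_ideal (P : R -> Prop) : Prop :=
  [/\ is_ideal P, ~ P 1 &
      forall Q, is_ideal Q -> (forall x, P x -> Q x) -> same_set Q P \/ Q 1].

Definition ideal_prod (A B : R -> Prop) : R -> Prop :=
  fun x => exists n (a b : 'I_n -> R),
    [/\ forall i, A (a i), forall i, B (b i) & x = \sum_(i < n) a i * b i].

Definition img (f : R -> R) (A : R -> Prop) : R -> Prop :=
  fun x => exists y, A y /\ x = f y.

Fixpoint iprod (f : nat -> R -> Prop) (n : nat) : R -> Prop :=
  match n with
  | 0 => f 0
  | k.+1 => ideal_prod (iprod f k) (f k.+1)
  end.

Definition sigz (sig sigi : R -> R) (n : int) : R -> R :=
  match n with
  | Posz k => iter k sig
  | Negz k => iter k.+1 sigi
  end.

Definition BRI (sig sigi : R -> R) (H J : R -> Prop) (n : int) : R -> Prop :=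
  match n with
  | Posz 0 => fun _ => True
  | Posz k.+1 => iprod (fun i => img (iter i sig) J) k
  | Negz k => iprod (fun i => img (iter i.+1 sigi) H) k
  end.

Variable M : zmodType.

(* A left module over B = (+)_n I^(n) t^n, given by the action of the
   homogeneous elements r t^n (r in I^(n)): act n r v = (r t^n) . v.
   Values of act n r for r outside I^(n) are irrelevant. *)
Definition is_BR_module (sig sigi : R -> R) (H J : R -> Prop)
  (act : int -> R -> M -> M) : Prop :=
  let I := BRI sig sigi H J in
  [/\ forall n r u v, I n r -> act n r (u + v) = act n r u + act n r v,
      forall n r s v, I n r -> I n s -> act n (r + s) v = act n r v + act n s v,
      forall v, act 0 1 v = v &
      forall (n m : int) r s v, I n r -> I m s ->
        act n r (act m s v) = act (n + m) (r * sigz sig sigi n s) v].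

Definition is_BR_submodule (sig sigi : R -> R) (H J : R -> Prop)
  (act : int -> R -> M -> M) (N : M -> Prop) : Prop :=
  [/\ N 0, (forall u v, N u -> N v -> N (u + v)) &
      forall n r v, BRI sig sigi H J n r -> N v -> N (act n r v)].

Definition is_simple_BR_module (sig sigi : R -> R) (H J : R -> Prop)
  (act : int -> R -> M -> M) : Prop :=
  [/\ is_BR_module sig sigi H J act, exists v : M, v != 0 &
      forall N, is_BR_submodule sig sigi H J act N ->
        (forall v, N v -> v = 0) \/ (forall v, N v)].

(* weight space M_P = { v | P v = 0 }, R acting through the degree-0 part *)
Definition wspace (act : int -> R -> M -> M) (P : R -> Prop) (v : M) : Prop :=
  forall x, P x -> act 0 x v = 0.

(* M = (+)_{P in Maxspec R} M_P with each M_P finite-dimensional over R/P *)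
Definition is_weight_module (act : int -> R -> M -> M) : Prop :=
  [/\
      forall v : M, exists n (P : 'I_n -> R -> Prop) (w : 'I_n -> M),
        [/\ forall i, is_maximal_ideal (P i), forall i, wspace act (P i) (w i)
          & v = \sum_(i < n) w i],
      forall n (P : 'I_n -> R -> Prop) (w : 'I_n -> M),
        (forall i, is_maximal_ideal (P i)) -> (forall i, wspace act (P i) (w i)) ->
        (forall i j, i != j -> ~ same_set (P i) (P j)) ->
        \sum_(i < n) w i = 0 -> forall i, w i = 0 &
      forall P, is_maximal_ideal P -> exists n (w : 'I_n -> M),
        (forall i, wspace act P (w i)) /\
        forall v, wspace act P v -> exists c : 'I_n -> R,
          v = \sum_(i < n) act 0 (c i) (w i)].

End BR.

(* Fix a nonzero vector v0 of weight sigma^l(m).  By simplicity M = B v0, so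
   every u in M is a finite sum of terms (r t^n) v0, and (r t^n) v0 has weight
   sigma^(l+n)(m).  The orbit being infinite, these weights are pairwise
   distinct, so when u itself has weight sigma^l(m) the directness of the weight
   decomposition leaves only the degree-0 terms: u = r v0 for some r in R.
   The algebraic input is that B is closed under multiplication, i.e.
   I^(n) sigma^n(I^(k)) is contained in I^(n+k). *)

From HB Require Import structures.
From mathcomp Require Import all_boot all_order all_algebra.
From mathcomp Require Import zify.
From Stdlib Require Import Classical.
Import GRing.Theory.
Set Implicit Arguments.
Unset Strict Implicit.
Unset Printing Implicit Defensive.
Local Open Scope ring_scope.

Section Ideals.
Variable R : comNzRingType.
Implicit Types (A B C : R -> Prop) (f : nat -> R -> Prop).

Definition add_closed C := C 0 /\ forall a b, C a -> C b -> C (a + b).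

Lemma ideal_add_closed A : is_ideal A -> add_closed A.
Proof. by case. Qed.

Lemma idealMl A r x : is_ideal A -> A x -> A (r * x).
Proof. by case=> _ _; apply. Qed.

Lemma idealMr A r x : is_ideal A -> A x -> A (x * r).
Proof. by rewrite mulrC; apply: idealMl. Qed.

Lemma ideal_prodM A B a b : A a -> B b -> ideal_prod A B (a * b).
Proof. by exists 1%N, (fun=> a), (fun=> b); rewrite big_ord1. Qed.

Lemma ideal_prod_ind A B C x : add_closed C ->
  (forall a b, A a -> B b -> C (a * b)) -> ideal_prod A B x -> C x.
Proof.
move=> [C0 CD] CM [n [a [b [Aa Bb ->]]]].
by apply: (big_ind C) => // i _; apply: CM.
Qed.

Lemma ideal_prod_ideal A B : is_ideal A -> is_ideal (ideal_prod A B).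
Proof.
move=> idA; split.
- by exists 0%N, (fun=> 0), (fun=> 0); rewrite big_ord0; split=> //; case.
- move=> _ _ [n1 [a1 [b1 [Aa1 Bb1 ->]]]] [n2 [a2 [b2 [Aa2 Bb2 ->]]]].
  pose glue (c1 : 'I_n1 -> R) (c2 : 'I_n2 -> R) i :=
    match split i with inl j => c1 j | inr j => c2 j end.
  exists (n1 + n2)%N, (glue a1 a2), (glue b1 b2); split.
  + by move=> i; rewrite /glue; case: split.
  + by move=> i; rewrite /glue; case: split.
  + by rewrite big_split_ord /glue; congr (_ + _); apply: eq_bigr => j _;
      rewrite ?(unsplitK (inl j)) ?(unsplitK (inr j)).
- move=> r _ [n [a [b [Aa Bb ->]]]].
  exists n, (fun i => r * a i), b; split => // [i|]; first exact: idealMl.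
  by rewrite mulr_sumr; apply: eq_bigr => i _; rewrite mulrA.
Qed.

Lemma iprod_ideal f k : (forall i, is_ideal (f i)) -> is_ideal (iprod f k).
Proof. by move=> idf; elim: k => [|k IH] /=; [exact: idf | exact: ideal_prod_ideal]. Qed.

Lemma iprod_big f k (x : nat -> R) :
  (forall i, (i <= k)%N -> f i (x i)) -> iprod f k (\prod_(0 <= i < k.+1) x i).
Proof.
elim: k => [|k IH] fx /=; first by rewrite big_nat1; apply: fx.
rewrite big_nat_recr //=; apply: ideal_prodM; last exact: fx.
by apply: IH => i /leqW; apply: fx.
Qed.

Lemma iprod_ind f k C : add_closed C ->
  (forall x : nat -> R, (forall i, (i <= k)%N -> f i (x i)) ->
     C (\prod_(0 <= i < k.+1) x i)) ->
  forall y, iprod f k y -> C y.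
Proof.
elim: k C => [|k IH] C addC Cx y /=.
  by move=> fy; have := Cx (fun=> y); rewrite big_nat1; apply=> i /[!leqn0] /eqP ->.
apply: ideal_prod_ind => // a b fa fb.
pose C' a := forall b, f k.+1 b -> C (a * b).
have addC' : add_closed C'.
  case: addC => C0 CD; split=> [b' _|a1 a2 Ca1 Ca2 b' fb']; first by rewrite mul0r.
  by rewrite mulrDl; apply: CD; [apply: Ca1 | apply: Ca2].
apply: (IH C' addC') => // x fx b' fb'.
pose x' i := if i == k.+1 then b' else x i.
have -> : \prod_(0 <= i < k.+1) x i = \prod_(0 <= i < k.+1) x' i.
  by rewrite !big_nat; apply: eq_bigr => i /andP[_ /ltn_eqF]; rewrite /x' => ->.
have := Cx x'; rewrite big_nat_recr //= /x' eqxx; apply=> i.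
by case: eqP => [-> //|/eqP ne ik]; apply: fx; rewrite -ltnS ltn_neqAle ne.
Qed.

Lemma iprodW f a c y :
  (forall i, is_ideal (f i)) -> (c <= a)%N -> iprod f a y -> iprod f c y.
Proof.
move=> idf ca; apply: iprod_ind; first exact: ideal_add_closed (iprod_ideal c idf).
move=> x fx; rewrite (@big_cat_nat _ _ _ c.+1) //=.
apply: idealMr; first exact: iprod_ideal.
by apply: iprod_big => i ic; apply: fx; apply: leq_trans ca.
Qed.

End Ideals.

Section Morphisms.
Variables (R : comNzRingType) (psi : {rmorphism R -> R}).
Implicit Types (A : R -> Prop) (f : nat -> R -> Prop).

Lemma iprod_concat f a b r s :
  (forall i, is_ideal (f i)) -> (forall j y, f j y -> f (a.+1 + j)%N (psi y)) ->
  iprod f a r -> iprod f b s -> iprod f (a + b.+1)%N (r * psi s).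
Proof.
move=> idf fpsi fr fs.
have [T0 TD] := ideal_add_closed (iprod_ideal (a + b.+1) idf).
move: r fr; apply: iprod_ind.
  by split=> [|r1 r2 h1 h2]; rewrite ?mul0r // mulrDl; apply: TD.
move=> x fx; move: s fs; apply: iprod_ind.
  by split=> [|s1 s2 h1 h2]; rewrite ?rmorph0 ?mulr0 // rmorphD mulrDr; apply: TD.
move=> y fy.
pose z i := if (i < a.+1)%N then x i else psi (y (i - a.+1)%N).
have -> : \prod_(0 <= i < a.+1) x i * psi (\prod_(0 <= i < b.+1) y i) =
          \prod_(0 <= i < (a + b.+1).+1) z i.
  rewrite [RHS](@big_cat_nat _ _ _ a.+1) //=; last by rewrite ltnS leq_addr.
  congr (_ * _).
    by rewrite !big_nat; apply: eq_bigr => i /andP[_ ia]; rewrite /z ia.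
  rewrite -{1}(add0n a.+1) big_addn rmorph_prod.
  have -> : ((a + b.+1).+1 - a.+1 = b.+1)%N by rewrite subSS addKn.
  rewrite !big_nat; apply: eq_bigr => i _.
  by rewrite /z -{2}(add0n a.+1) ltn_add2r ltn0 addnK.
apply: iprod_big => i ik; rewrite /z; case: ifP => ia; first by apply: fx; rewrite -ltnS.
have ib : (i - a.+1 <= b)%N by rewrite leq_subLR; lia.
by have := fpsi (i - a.+1)%N _ (fy _ ib); rewrite subnKC // leqNgt ia.
Qed.

Lemma iprod_suffix f f' b c s :
  (forall i, is_ideal (f' i)) -> (c <= b)%N ->
  (forall j y, f (c + j)%N y -> f' j (psi y)) ->
  iprod f b s -> iprod f' (b - c)%N (psi s).
Proof.
move=> idf' cb fpsi.
have [T0 TD] := ideal_add_closed (iprod_ideal (b - c) idf').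
apply: (iprod_ind (C := fun s => iprod f' (b - c) (psi s))).
  by split=> [|s1 s2 h1 h2]; rewrite ?rmorph0 // rmorphD; apply: TD.
move=> y fy; rewrite rmorph_prod (@big_cat_nat _ _ _ c) //=; last exact: leqW.
apply: idealMl; first exact: iprod_ideal.
have -> : \prod_(c <= i < b.+1) psi (y i) = \prod_(0 <= i < (b - c).+1) psi (y (i + c)%N).
  by rewrite -{1}(add0n c) big_addn subSn.
by apply: iprod_big => i ib; apply: fpsi; rewrite addnC; apply: fy; lia.
Qed.

Variables (g : R -> R) (psiK : cancel psi g) (gK : cancel g psi).

Definition inv_rmorphism : {rmorphism R -> R} :=
  HB.pack g (GRing.isNmodMorphism.Build R R g (can2_nmod_morphism psiK gK))
    (GRing.isMonoidMorphism.Build R R g (can2_monoid_morphism psiK gK)).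

Lemma img_ideal A : is_ideal A -> is_ideal (img psi A).
Proof.
case=> A0 AD AM; split.
- by exists 0; rewrite rmorph0.
- move=> _ _ [x [Ax ->]] [y [Ay ->]].
  by exists (x + y); rewrite rmorphD; split=> //; apply: AD.
- move=> r _ [y [Ay ->]]; exists (g r * y); split; first exact: AM.
  by rewrite rmorphM gK.
Qed.

End Morphisms.

Lemma img_maximal (R : comNzRingType) (psi : {rmorphism R -> R}) g A :
  cancel psi g -> cancel g psi -> is_maximal_ideal A -> is_maximal_ideal (img psi A).
Proof.
move=> psiK gK [idA A1 maxA]; split; first exact: (img_ideal gK idA).
  by case=> y [Ay y1]; apply: A1; rewrite -(psiK 1) rmorph1 y1 psiK.
move=> Q idQ AQ.
have idgQ := @img_ideal _ (inv_rmorphism psiK gK) psi psiK Q idQ.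
have AgQ x : A x -> img g Q x.
  by move=> Ax; exists (psi x); rewrite psiK; split=> //; apply: AQ; exists x.
case: (maxA _ idgQ AgQ) => [gQA | [y [Qy y1]]]; last first.
  by right; rewrite -(rmorph1 psi) y1 gK.
left=> x; split; last exact: AQ.
by move=> Qx; exists (g x); rewrite gK; split=> //; apply/gQA; exists x.
Qed.

Section ShiftInvariantEquivalence.
Variable E : int -> int -> Prop.
Hypotheses (E_sym : forall a b, E a b -> E b a)
  (E_trans : forall a b c, E a b -> E b c -> E a c)
  (E_shift : forall c a b, E a b -> E (c + a) (c + b)).

Lemma shift_equiv_mulr (p : int) : E 0 p -> forall k : int, E 0 (k * p).
Proof.
move=> E0p k; have E00 : E 0 0 by apply: E_trans E0p (E_sym E0p).
elim/int_rect: k => [|k IH|k IH]; rewrite ?mul0r //.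
  apply: E_trans IH _; have := E_shift (k%:Z * p) E0p.
  by rewrite addr0 -addn1 PoszD mulrDl mul1r.
apply: E_trans IH (E_sym _); have := E_shift (- (k.+1)%:Z * p) E0p.
by rewrite addr0 -addn1 PoszD opprD mulrDl mulN1r addrNK.
Qed.

Lemma shift_equiv_periodic d d' : d != d' -> E d d' ->
  exists2 p : nat, (0 < p)%N & forall a, E a (a %% p)%Z.
Proof.
move=> dd' Edd'.
have E0q : E 0 (d' - d) by have := E_shift (- d) Edd'; rewrite addNr addrC.
have [p p_gt0 E0p] : exists2 p : nat, (0 < p)%N & E 0 p.
  case q_def: (d' - d) E0q => [[|q]|q] E0q.
  - by move/eqP: q_def; rewrite subr_eq0 eq_sym (negbTE dd').
  - by exists q.+1.
  - exists q.+1 => //; apply: E_sym; have := E_shift (Posz q.+1) E0q.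
    by rewrite addr0 NegzE addrN.
exists p => // a; apply: E_sym.
have := E_shift (a %% p)%Z (shift_equiv_mulr E0p (a %/ p)%Z).
by rewrite addr0 addrC -divz_eq.
Qed.

End ShiftInvariantEquivalence.

Section Iterates.
Variables (R : comNzRingType) (f : {rmorphism R -> R}).

Lemma iter_nmod_morphism n : nmod_morphism (iter n f).
Proof.
split=> [|x y]; elim: n => //= n ->; first exact: rmorph0.
exact: rmorphD.
Qed.

Lemma iter_monoid_morphism n : monoid_morphism (iter n f).
Proof.
split=> [|x y]; elim: n => //= n ->; first exact: rmorph1.
exact: rmorphM.
Qed.

End Iterates.

Section Automorphism.
Variables (R : comNzRingType) (sig : {rmorphism R -> R}) (sigi : R -> R).
Hypotheses (sigK : cancel sig sigi) (sigiK : cancel sigi sig).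

Local Notation sz := (sigz sig sigi).

Lemma sigz_nmod_morphism n : nmod_morphism (sz n).
Proof.
case: n => k; first exact: iter_nmod_morphism.
exact: (iter_nmod_morphism (inv_rmorphism sigK sigiK)).
Qed.

Lemma sigz_monoid_morphism n : monoid_morphism (sz n).
Proof.
case: n => k; first exact: iter_monoid_morphism.
exact: (iter_monoid_morphism (inv_rmorphism sigK sigiK)).
Qed.

(* The underlying function is literally [sz n], so [sigz_rmorphism n] can stand
   for [sz n] (or for [iter k sig], [iter k.+1 sigi]) up to conversion. *)
Definition sigz_rmorphism n : {rmorphism R -> R} :=
  HB.pack (sz n) (GRing.isNmodMorphism.Build R R (sz n) (sigz_nmod_morphism n))
    (GRing.isMonoidMorphism.Build R R (sz n) (sigz_monoid_morphism n)).

Lemma sigzD1 n x : sz (n + 1) x = sig (sz n x).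
Proof.
case: n => [k|[|k]] //; first by rewrite -PoszD addn1.
have -> : Negz k.+1 + 1 = Negz k by rewrite !NegzE; lia.
by rewrite /= sigiK.
Qed.

Lemma sigz_add a b x : sz (a + b) x = sz a (sz b x).
Proof.
elim/int_rect: a x => [|a IH|a IH] x; first by rewrite add0r.
  by rewrite -addn1 PoszD addrAC !sigzD1 IH.
have aS : - (a.+1)%:Z + 1 = - a%:Z by lia.
by apply: (can_inj sigK); rewrite -!sigzD1 addrAC aS IH.
Qed.

Lemma sigzK a : cancel (sz a) (sz (- a)).
Proof. by move=> x; rewrite -sigz_add addNr. Qed.

Lemma sigzKV a : cancel (sz (- a)) (sz a).
Proof. by move=> x; rewrite -sigz_add addrN. Qed.

Lemma img_sigz_ideal n A : is_ideal A -> is_ideal (img (sz n) A).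
Proof. exact: (@img_ideal _ (sigz_rmorphism n) _ (sigzKV n)). Qed.

Lemma img_sigzD A c a x : img (sz (c + a)) A x <-> img (sz c) (img (sz a) A) x.
Proof.
split=> [[y [Ay ->]] | [_ [[y [Ay ->]] ->]]]; last by exists y; rewrite sigz_add.
by exists (sz a y); rewrite sigz_add; split=> //; exists y.
Qed.

Lemma sigz_orbit_injective A :
  (forall (n : nat) (Q : 'I_n -> R -> Prop),
     exists l : int, forall i, ~ same_set (img (sz l) A) (Q i)) ->
  forall a b, a != b -> ~ same_set (img (sz a) A) (img (sz b) A).
Proof.
move=> orbit_inf a b ab Eab.
pose E i j := same_set (img (sz i) A) (img (sz j) A).
have E_sym a' b' : E a' b' -> E b' a' by move=> e x; split=> /e.
have E_trans a' b' c' : E a' b' -> E b' c' -> E a' c'.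
  by move=> e1 e2 x; split=> [/e1/e2|/e2/e1].
have E_shift c a' b' : E a' b' -> E (c + a') (c + b').
  by move=> e x; rewrite !img_sigzD; split=> -[y [/e ey ->]]; exists y.
have [p p_gt0 Ep] := shift_equiv_periodic E_sym E_trans E_shift ab Eab.
have [l not_El] := orbit_inf p (fun i => img (sz (Posz i)) A).
have p0 : p%:Z != 0 by lia.
have lp : (absz (l %% p)%Z < p)%N by rewrite -ltz_nat gez0_abs ?modz_ge0 ?ltz_pmod.
apply: (not_El (Ordinal lp)); change (E l (absz (l %% p)%Z)).
by rewrite gez0_abs ?modz_ge0 //; exact: Ep.
Qed.

Variables (H J : R -> Prop).
Hypotheses (idH : is_ideal H) (idJ : is_ideal J).

Local Notation I := (BRI sig sigi H J).
Local Notation Jpow i := (img (iter i sig) J).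
Local Notation Hpow i := (img (iter i.+1 sigi) H).

Lemma BRI_ideal n : is_ideal (I n).
Proof.
case: n => [[|a]|a] /=; first by split.
- by apply: iprod_ideal => i; exact: (img_sigz_ideal (Posz i) idJ).
- by apply: iprod_ideal => i; exact: (img_sigz_ideal (Negz i) idH).
Qed.

Lemma BRI_mul_pos_neg a b r s : I (Posz a.+1) r -> I (Negz b) s ->
  I (Posz a.+1 + Negz b) (r * sz (Posz a.+1) s).
Proof.
move=> Ir Is; case: (ltngtP a b) => ab.
- have -> : Posz a.+1 + Negz b = Negz (b - a.+1) by rewrite !NegzE; lia.
  rewrite mulrC; apply: idealMr; first exact: BRI_ideal.
  apply: (iprod_suffix (psi := sigz_rmorphism (Posz a.+1)) (f := fun i => Hpow i)) => //.
  + by move=> i; exact: (img_sigz_ideal (Negz i) idH).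
  + move=> j _ [z [Hz ->]]; exists z; split=> //.
    change (sz (Posz a.+1) (sz (Negz (a.+1 + j)) z) = sz (Negz j) z).
    by rewrite -sigz_add; congr sz; rewrite !NegzE; lia.
- have -> : Posz a.+1 + Negz b = Posz (a - b.+1).+1 by rewrite !NegzE; lia.
  apply: idealMr; first exact: BRI_ideal.
  apply: (iprodW _ _ Ir); last lia.
  by move=> i; exact: (img_sigz_ideal (Posz i) idJ).
- by have -> : Posz a.+1 + Negz b = 0 by rewrite !NegzE; lia.
Qed.

Lemma BRI_mul_neg_pos a b r s : I (Negz a) r -> I (Posz b.+1) s ->
  I (Negz a + Posz b.+1) (r * sz (Negz a) s).
Proof.
move=> Ir Is; case: (ltngtP a b) => ab.
- have -> : Negz a + Posz b.+1 = Posz (b - a.+1).+1 by rewrite !NegzE; lia.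
  rewrite mulrC; apply: idealMr; first exact: BRI_ideal.
  apply: (iprod_suffix (psi := sigz_rmorphism (Negz a)) (f := fun i => Jpow i)) => //.
  + by move=> i; exact: (img_sigz_ideal (Posz i) idJ).
  + move=> j _ [z [Jz ->]]; exists z; split=> //.
    change (sz (Negz a) (sz (Posz (a.+1 + j)) z) = sz (Posz j) z).
    by rewrite -sigz_add; congr sz; rewrite !NegzE; lia.
- have -> : Negz a + Posz b.+1 = Negz (a - b.+1) by rewrite !NegzE; lia.
  apply: idealMr; first exact: BRI_ideal.
  apply: (iprodW _ _ Ir); last lia.
  by move=> i; exact: (img_sigz_ideal (Negz i) idH).
- by have -> : Negz a + Posz b.+1 = 0 by rewrite !NegzE; lia.
Qed.

Lemma BRI_mul n m r s : I n r -> I m s -> I (n + m) (r * sz n s).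
Proof.
have idJpow i : is_ideal (Jpow i) by exact: (img_sigz_ideal (Posz i) idJ).
have idHpow i : is_ideal (Hpow i) by exact: (img_sigz_ideal (Negz i) idH).
case: n => [[|a]|a]; case: m => [[|b]|b] Ir Is; rewrite ?add0r ?addr0;
  try by [apply: idealMl; first exact: BRI_ideal | apply: idealMr; first exact: BRI_ideal].
- have -> : Posz a.+1 + Posz b.+1 = Posz (a + b.+1).+1 by lia.
  apply: (iprod_concat (psi := sigz_rmorphism (Posz a.+1))) => // j _ [z [Jz ->]].
  by exists z; split=> //; rewrite iterD.
- exact: BRI_mul_pos_neg.
- exact: BRI_mul_neg_pos.
- have -> : Negz a + Negz b = Negz (a + b.+1) by rewrite !NegzE; lia.
  apply: (iprod_concat (psi := sigz_rmorphism (Negz a))) => // j _ [z [Hz ->]].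
  by exists z; split=> //; rewrite -addnS iterD.
Qed.

End Automorphism.

Section Modules.
Variables (R : comNzRingType) (sig : {rmorphism R -> R}) (sigi : R -> R).
Hypotheses (sigK : cancel sig sigi) (sigiK : cancel sigi sig).
Variables (H J : R -> Prop) (M : zmodType) (act : int -> R -> M -> M).
Hypothesis Mmod : is_BR_module sig sigi H J act.

Local Notation I := (BRI sig sigi H J).
Local Notation sz := (sigz sig sigi).

Lemma act0 n r : I n r -> act n r 0 = 0.
Proof.
by case: Mmod => actD _ _ _ Ir; apply: (addrI (act n r 0)); rewrite -actD // !addr0.
Qed.

Lemma actN n r v : I n r -> act n r (- v) = - act n r v.
Proof.
by case: Mmod => actD _ _ _ Ir; apply: (addrI (act n r v)); rewrite -actD // !subrr act0.
Qed.

Lemma act_sumr n r (T : Type) (s : seq T) (P : pred T) (F : T -> M) : I n r ->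
  act n r (\sum_(i <- s | P i) F i) = \sum_(i <- s | P i) act n r (F i).
Proof.
by case: Mmod => actD _ _ _ Ir; apply: big_morph => [u v|]; [apply: actD | apply: act0].
Qed.

Lemma act_suml (T : Type) (s : seq T) (P : pred T) (F : T -> R) v :
  act 0 (\sum_(i <- s | P i) F i) v = \sum_(i <- s | P i) act 0 (F i) v.
Proof.
case: Mmod => _ actDl _ _; apply: (big_morph (fun r => act 0 r v)) => [r1 r2|].
  by apply: actDl.
by apply: (addrI (act 0 0 v)); rewrite -actDl // !addr0.
Qed.

Lemma wspaceN P v : wspace act P v -> wspace act P (- v).
Proof. by move=> Wv x Px; rewrite actN // Wv // oppr0. Qed.

Lemma wspace_sum P (T : Type) (s : seq T) (Q : pred T) (F : T -> M) :
  (forall i, Q i -> wspace act P (F i)) -> wspace act P (\sum_(i <- s | Q i) F i).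
Proof. by move=> WF x Px; rewrite act_sumr // big1 // => i /WF ->. Qed.

Lemma wspace_act n r P v :
  I n r -> wspace act P v -> wspace act (img (sz n) P) (act n r v).
Proof.
case: Mmod => _ _ _ actM Ir Wv _ [y [Py ->]].
rewrite actM // add0r mulrC.
by have := actM n 0 r y v Ir; rewrite addr0 => <- //; rewrite Wv // act0.
Qed.

Lemma wspace_orbit_act n r A j v : I n r ->
  wspace act (img (sz j) A) v -> wspace act (img (sz (j + n)) A) (act n r v).
Proof.
move=> Ir /(wspace_act Ir) Wv x; rewrite addrC => /(img_sigzD sigK sigiK).
exact: Wv.
Qed.

Lemma weight_components_eq0 (T : eqType) (P : T -> R -> Prop) (Q : seq (T * M)) :
  is_weight_module act -> (forall t, is_maximal_ideal (P t)) ->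
  (forall s t, s != t -> ~ same_set (P s) (P t)) ->
  (forall q, q \in Q -> wspace act (P q.1) q.2) ->
  \sum_(q <- Q) q.2 = 0 -> forall t, \sum_(q <- Q | q.1 == t) q.2 = 0.
Proof.
move=> [_ direct _] maxP injP WQ sumQ t.
pose D := undup [seq q.1 | q <- Q].
pose b d := \sum_(q <- Q | q.1 == d) q.2.
have Wb d : wspace act (P d) (b d).
  by rewrite /b big_seq_cond; apply: wspace_sum => q /andP[/WQ + /eqP <-].
have sumb : \sum_(d <- D) b d = \sum_(q <- Q) q.2.
  rewrite /b; under eq_bigr => d _ do rewrite big_mkcond.
  rewrite exchange_big /=; apply: eq_big_seq => q Qq.
  have qD : q.1 \in D by rewrite mem_undup map_f.
  rewrite (bigD1_seq q.1) ?undup_uniq //= eqxx big1 ?addr0 // => d dq.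
  by rewrite eq_sym (negbTE dq).
have [tD|tD] := boolP (t \in D); last first.
  rewrite big_seq_cond big1 // => q /andP[Qq /eqP qt].
  by case/negP: tD; rewrite mem_undup -qt map_f.
have tDi : (index t D < size D)%N by rewrite index_mem.
have := direct (size D) (fun i => P (nth t D i)) (fun i => b (nth t D i)).
move=> /(_ _ _ _ _ (Ordinal tDi)) /=; rewrite nth_index //; apply=> [i|i|i j ij|].
- exact: maxP.
- exact: Wb.
- by apply: injP; rewrite nth_uniq ?undup_uniq.
- by rewrite (big_nth t) big_mkord sumQ in sumb.
Qed.

Definition BR_span (v0 u : M) : Prop := exists L : seq (int * R),
  (forall p, p \in L -> I p.1 p.2) /\ u = \sum_(p <- L) act p.1 p.2 v0.

Hypotheses (idH : is_ideal H) (idJ : is_ideal J).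

Lemma BR_span_submodule v0 : is_BR_submodule sig sigi H J act (BR_span v0).
Proof.
split.
- by exists [::]; rewrite big_nil.
- move=> _ _ [L1 [IL1 ->]] [L2 [IL2 ->]]; exists (L1 ++ L2); rewrite big_cat.
  by split=> // p; rewrite mem_cat => /orP[/IL1|/IL2].
- move=> n r _ Ir [L [IL ->]]; exists [seq (n + p.1, r * sz n p.2) | p <- L]; split.
    by move=> _ /mapP[p Lp ->]; apply: BRI_mul => //; apply: IL.
  rewrite act_sumr // big_map; apply: eq_big_seq => p Lp.
  by case: Mmod => _ _ _ actM; rewrite actM //; apply: IL.
Qed.

Lemma simple_BR_span v0 u :
  is_simple_BR_module sig sigi H J act -> v0 != 0 -> BR_span v0 u.
Proof.
case=> _ _ simple v0_nz; case: (simple _ (BR_span_submodule v0)) => [span0|]; last exact.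
case/eqP: v0_nz; apply: span0; exists [:: (0, 1)]; split.
  by move=> p; rewrite inE => /eqP ->.
by case: Mmod => _ _ act1 _; rewrite big_seq1 act1.
Qed.

Lemma weight_space_cyclic A l v0 u :
  is_simple_BR_module sig sigi H J act -> is_weight_module act -> is_maximal_ideal A ->
  (forall d d', d != d' -> ~ same_set (img (sz d) A) (img (sz d') A)) ->
  v0 != 0 -> wspace act (img (sz l) A) v0 -> wspace act (img (sz l) A) u ->
  exists r, u = act 0 r v0.
Proof.
move=> simple weight maxA injA v0_nz Wv0 Wu.
have [L [IL u_def]] := simple_BR_span u simple v0_nz.
pose Q := (0, - u) :: [seq (p.1, act p.1 p.2 v0) | p <- L].
have maxQ d : is_maximal_ideal (img (sz (l + d)) A).
  exact: (img_maximal (psi := sigz_rmorphism sigK sigiK (l + d)) (sigzK sigK sigiK _)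
    (sigzKV sigK sigiK _) maxA).
have injQ d d' : d != d' -> ~ same_set (img (sz (l + d)) A) (img (sz (l + d')) A).
  by move=> dd'; apply: injA; rewrite (inj_eq (addrI l)).
have WQ q : q \in Q -> wspace act (img (sz (l + q.1)) A) q.2.
  rewrite inE => /orP[/eqP -> | /mapP[p Lp ->]]; last exact: wspace_orbit_act (IL _ Lp) Wv0.
  by rewrite addr0; exact: wspaceN.
have sumQ : \sum_(q <- Q) q.2 = 0 by rewrite big_cons big_map -u_def addNr.
have := weight_components_eq0 weight maxQ injQ WQ sumQ 0.
rewrite big_cons /= big_map /= (eq_bigr (fun p => act 0 p.2 v0)) => [|p /eqP -> //].
rewrite -act_suml => u_deg0; exists (\sum_(p <- L | p.1 == 0) p.2).
by apply/eqP; rewrite eq_sym -subr_eq0 addrC u_deg0.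
Qed.

End Modules.

Theorem proposition3p4
  (k : fieldType) (R : comAlgType k)
  (R_domain : forall a b : R, a * b = 0 -> a = 0 \/ b = 0)
  (sig : {lrmorphism R -> R}) (sigi : R -> R)
  (sigK : cancel sig sigi) (sigiK : cancel sigi sig)
  (H J : R -> Prop) (HH : is_ideal H) (HJ : is_ideal J)
  (Inz : forall n : int, exists x, BRI sig sigi H J n x /\ x != 0)
  (m : R -> Prop) (m_max : is_maximal_ideal m)
  (orbit_infinite : forall (n : nat) (Q : 'I_n -> R -> Prop),
     exists l : int, forall i, ~ same_set (img (sigz sig sigi l) m) (Q i))
  (M : zmodType) (act : int -> R -> M -> M)
  (M_simple : is_simple_BR_module sig sigi H J act)
  (M_weight : is_weight_module act)
  (M_supp : forall P : R -> Prop, is_maximal_ideal P ->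
     (exists v : M, v != 0 /\ wspace act P v) ->
     exists l : int, same_set P (img (sigz sig sigi l) m)) :
  forall l : int, exists w : M,
    wspace act (img (sigz sig sigi l) m) w /\
    forall v, wspace act (img (sigz sig sigi l) m) v ->
      exists r : R, v = act 0 r w.
Proof.
move=> l; have Mmod : is_BR_module sig sigi H J act by case: M_simple.
have orbit_inj := sigz_orbit_injective sigK sigiK orbit_infinite.
have [[v0 [v0_nz Wv0]] | no_weight] :=
  classic (exists v0, v0 != 0 /\ wspace act (img (sigz sig sigi l) m) v0).
  exists v0; split=> // u Wu.
  exact: (weight_space_cyclic sigK sigiK Mmod HH HJ M_simple M_weight m_max orbit_inj v0_nz Wv0 Wu).
exists 0; split=> [x _|v Wv]; first exact: (act0 Mmod).
exists 0; rewrite (act0 Mmod) //; case: (eqVneq v 0) => // v_nz.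
by case: no_weight; exists v.
Qed.
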